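(* Let $(A,\dagger)$ be a commutative unital $\mathbb{K}$-algebra with involution, and extend $\dagger$ to $T^+(A)$ letterwise, $(a_1\otimes\cdots\otimes a_n)^\dagger=a_1^\dagger\otimes\cdots\otimes a_n^\dagger$. On $T^+(A)$ define $$X\prec Y:=X\,\bar\bullet^\ell\,P_A(Y),\qquad X\succ Y:=P_A(X)\,\bar\bullet^\ell\,Y,\qquad X\bullet Y:=-X\,\bar\bullet^\ell\,P_A(1_A)\,\bar\bullet^\ell\,Y .$$ Then $(T^+(A),\prec,\succ,\bullet)$ is a commutative tridendriform algebra, and $(X\prec Y)^\dagger=X^\dagger\prec Y^\dagger$ and $(X\bullet Y)^\dagger=X^\dagger\bullet Y^\dagger$ for all $X,Y\in T^+(A)$.
   Context: $\mathbb{K}$ is a field of characteristic $0$; $A$ has product $[a;b]$ and unit $1_A$; an involution is a linear $\dagger$ with $\dagger^2=\mathrm{id}$ and $[a;b]^\dagger=[b^\dagger;a^\dagger]$. $T(A)=\bigoplus_{n\ge0}A^{\otimes n}$, $A^{\otimes0}=\mathbb{K}1_{\mathbb{K}}$, $a\otimes1_{\mathbb{K}}$ identified with $a$. The left-shift shuffle $\bullet^\ell$ is the bilinear product on $T(A)$ with $k1_{\mathbb{K}}\bullet^\ell U=kU=U\bullet^\ell k1_{\mathbb{K}}$ and $(a\otimes U)\bullet^\ell(b\otimes V)=a\otimes(U\bullet^\ell(b\otimes V))+b\otimes((a\otimes U)\bullet^\ell V)-[a;b]\otimes1_A\otimes(U\bullet^\ell V)$ for $a,b\in A$. $T^+(A)=A\otimes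 T(A)$ with $(a\otimes U)\bar\bullet^\ell(b\otimes V)=[a;b]\otimes(U\bullet^\ell V)$, unit $1_A=1_A\otimes1_{\mathbb{K}}$; $P_A(a_1\otimes\cdots\otimes a_n)=1_A\otimes a_1\otimes\cdots\otimes a_n$, so $P_A(1_A)=1_A\otimes1_A$. A tridendriform algebra is a vector space with bilinear $\prec,\succ,\bullet$ such that, with $x\star y:=x\prec y+x\succ y+x\bullet y$: $(x\prec y)\prec z=x\prec(y\star z)$, $(x\succ y)\prec z=x\succ(y\prec z)$, $(x\star y)\succ z=x\succ(y\succ z)$, $(x\succ y)\bullet z=x\succ(y\bullet z)$, $(x\prec y)\bullet z=x\bullet(y\succ z)$, $(x\bullet y)\prec z=x\bullet(y\prec z)$, $(x\bullet y)\bullet z=x\bullet(y\bullet z)$. It is commutative if $x\prec y=y\succ x$ and $x\bullet y=y\bullet x$. *)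

From HB Require Import structures.
From mathcomp Require Import all_boot all_order all_algebra.
Set Implicit Arguments. Unset Strict Implicit. Unset Printing Implicit Defensive.
Import GRing.Theory.
Local Open Scope ring_scope.

(* Tensor algebra T(A) over the field K, represented by formal K-linear
   combinations of words (finite lists) a_1 ... a_n of elements of A,
   the word [::] standing for 1_K and a word a_1...a_n for a_1 (x) ... (x) a_n.
   Two formal combinations are identified (teq) iff they agree under every
   K-multilinear map into every K-vector space, i.e. iff they are equal in the
   quotient of the free K-module on words by the multilinearity relations,
   which is T(A) = \bigoplus_n A^{(x) n}. *)

Section TensorAlgebra.
Variables (K : fieldType) (A : comAlgType K).

Definition fsum := seq (K * seq A).

Definition multilinear (V : lmodType K) (f : seq A -> V) : Prop :=
  forall (u v : seq A) (k : K) (a b : A),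
    f (u ++ (k *: a + b) :: v) = k *: f (u ++ a :: v) + f (u ++ b :: v).

Definition evalF (V : lmodType K) (f : seq A -> V) (X : fsum) : V :=
  \sum_(p <- X) p.1 *: f p.2.

Definition teq (X Y : fsum) : Prop :=
  forall (V : lmodType K) (f : seq A -> V), multilinear f -> evalF f X = evalF f Y.

Definition scaleF (k : K) (X : fsum) : fsum := [seq (k * p.1, p.2) | p <- X].
Definition consF (a : A) (X : fsum) : fsum := [seq (p.1, a :: p.2) | p <- X].

Fixpoint lsh (U : seq A) : seq A -> fsum :=
  match U with
  | [::] => fun V => [:: (1, V)]
  | a :: U' =>
      fix lshU (V : seq A) : fsum :=
        match V with
        | [::] => [:: (1, a :: U')]
        | b :: V' =>
            consF a (lsh U' V) ++ consF b (lshU V')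
              ++ scaleF (-1) (consF (a * b) (consF 1 (lsh U' V')))
        end
  end.

(* T^+(A) = A (x) T(A): formal combinations of (k, (a, U)) meaning k (a (x) U) *)
Definition tplus := seq (K * (A * seq A)).

Definition toT (X : tplus) : fsum := [seq (p.1, p.2.1 :: p.2.2) | p <- X].

Definition tpeq (X Y : tplus) : Prop := teq (toT X) (toT Y).

Definition tpadd (X Y : tplus) : tplus := X ++ Y.
Definition tpscale (k : K) (X : tplus) : tplus := [seq (k * p.1, p.2) | p <- X].

(* (a (x) U) barbullet (b (x) V) = [a;b] (x) (U bullet^l V), extended bilinearly *)
Definition barmul (X Y : tplus) : tplus :=
  flatten [seq flatten [seq [seq (p.1 * q.1 * r.1, (p.2.1 * q.2.1, r.2))
                             | r <- lsh p.2.2 q.2.2] | q <- Y] | p <- X].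

Definition PA (X : tplus) : tplus := [seq (p.1, (1, p.2.1 :: p.2.2)) | p <- X].

(* 1_A = 1_A (x) 1_K as an element of T^+(A) *)
Definition tpone : tplus := [:: (1, (1, [::]))].

Definition tprec (X Y : tplus) : tplus := barmul X (PA Y).
Definition tsucc (X Y : tplus) : tplus := barmul (PA X) Y.
Definition tdot (X Y : tplus) : tplus :=
  tpscale (-1) (barmul (barmul X (PA tpone)) Y).

Definition tdag (dg : A -> A) (X : tplus) : tplus :=
  [seq (p.1, (dg p.2.1, map dg p.2.2)) | p <- X].

End TensorAlgebra.

Definition is_tridendriform (T : Type) (eqv : T -> T -> Prop) (add : T -> T -> T)
  (pr su bu : T -> T -> T) : Prop :=
  let st x y := add (add (pr x y) (su x y)) (bu x y) in
  forall x y z : T,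
    eqv (pr (pr x y) z) (pr x (st y z)) /\
    eqv (pr (su x y) z) (su x (pr y z)) /\
    eqv (su (st x y) z) (su x (su y z)) /\
    eqv (bu (su x y) z) (su x (bu y z)) /\
    eqv (bu (pr x y) z) (bu x (su y z)) /\
    eqv (pr (bu x y) z) (bu x (pr y z)) /\
    eqv (bu (bu x y) z) (bu x (bu y z)).

Definition is_commutative_trid (T : Type) (eqv : T -> T -> Prop)
  (pr su bu : T -> T -> T) : Prop :=
  forall x y : T, eqv (pr x y) (su y x) /\ eqv (bu x y) (bu y x).

From HB Require Import structures.
From mathcomp Require Import all_boot all_order all_algebra zify.
Import GRing.Theory.
Local Open Scope ring_scope.
Set Implicit Arguments. Unset Strict Implicit.

(* All the identities hold already in the free K-module on words, i.e.
   after evaluation against an arbitrary (not necessarily multilinear)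
   function of words.  Unfolding the three products, each tridendriform axiom
   becomes an instance of three properties of the left-shift shuffle:
   commutativity (A is commutative), associativity, and the fact that a
   leading letter 1_A passes through a shuffle unchanged.  Associativity is
   proved by induction on the total length: the recursion expands both
   (u . v) . w and u . (v . w) into the same seven shorter terms.  Since A is
   commutative, dagger is a unital algebra morphism, so applying it
   letterwise commutes with the shuffle. *)

Arguments lsh : simpl never.
Arguments consF : simpl never.
Arguments scaleF : simpl never.
Arguments evalF : simpl never.

Section ShuffleEvaluation.
Variables (K : fieldType) (A : comAlgType K) (V : lmodType K).
Implicit Types (f g : seq A -> V) (u v w : seq A) (X Y : fsum A).

Lemma evalF_cat f X Y : evalF f (X ++ Y) = evalF f X + evalF f Y.
Proof. by rewrite /evalF big_cat. Qed.

Lemma evalF_seq1 f w : evalF f [:: (1, w)] = f w.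
Proof. by rewrite /evalF big_seq1 scale1r. Qed.

Lemma evalF_consF f a X : evalF f (consF a X) = evalF (fun w => f (a :: w)) X.
Proof. by rewrite /evalF /consF big_map. Qed.

Lemma evalF_scaleF f k X : evalF f (scaleF k X) = k *: evalF f X.
Proof.
rewrite /evalF /scaleF big_map scaler_sumr.
by apply: eq_bigr => p _; rewrite scalerA.
Qed.

Lemma eq_evalF f g X : f =1 g -> evalF f X = evalF g X.
Proof. by move=> efg; apply: eq_bigr => p _; rewrite efg. Qed.

Lemma evalFD f g X : evalF (fun w => f w + g w) X = evalF f X + evalF g X.
Proof.
by rewrite /evalF -big_split; apply: eq_bigr => p _; rewrite scalerDr.
Qed.

Lemma evalFN f X : evalF (fun w => - f w) X = - evalF f X.
Proof. by rewrite /evalF -sumrN; apply: eq_bigr => p _; rewrite scalerN. Qed.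

Lemma evalFB f g X : evalF (fun w => f w - g w) X = evalF f X - evalF g X.
Proof. by rewrite evalFD evalFN. Qed.

Lemma lsh0l v : lsh [::] v = [:: (1, v)]. Proof. by []. Qed.
Lemma lsh0r u : lsh u [::] = [:: (1, u)]. Proof. by case: u. Qed.

Lemma lsh_cons a u b v : lsh (a :: u) (b :: v) =
  consF a (lsh u (b :: v)) ++ consF b (lsh (a :: u) v)
    ++ scaleF (-1) (consF (a * b) (consF 1 (lsh u v))).
Proof. by []. Qed.

Lemma evalF_lsh_cons f a u b v : evalF f (lsh (a :: u) (b :: v)) =
  evalF (fun w => f (a :: w)) (lsh u (b :: v))
  + evalF (fun w => f (b :: w)) (lsh (a :: u) v)
  - evalF (fun w => f (a * b :: 1 :: w)) (lsh u v).
Proof.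
by rewrite lsh_cons !evalF_cat evalF_scaleF !evalF_consF scaleN1r addrA.
Qed.

Lemma evalF_lsh1l f u v :
  evalF f (lsh (1 :: u) v) = evalF (fun w => f (1 :: w)) (lsh u v).
Proof.
elim: v f => [|b v IHv] f; first by rewrite !lsh0r !evalF_seq1.
by rewrite evalF_lsh_cons IHv mul1r addrK.
Qed.

Lemma evalF_lshC f u v : evalF f (lsh u v) = evalF f (lsh v u).
Proof.
elim: u v f => [|a u IHu] v f; first by rewrite lsh0r.
elim: v f => [|b v IHv] f; first by rewrite lsh0r.
by rewrite !evalF_lsh_cons IHu IHv IHu mulrC (addrC (evalF _ (lsh v _))).
Qed.

Lemma evalF_lsh1r f u v :
  evalF f (lsh u (1 :: v)) = evalF (fun w => f (1 :: w)) (lsh u v).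
Proof. by rewrite evalF_lshC evalF_lsh1l evalF_lshC. Qed.

Definition eval_lsh_lassoc f u v w :=
  evalF (fun s => evalF f (lsh s w)) (lsh u v).
Definition eval_lsh_rassoc f u v w :=
  evalF (fun t => evalF f (lsh u t)) (lsh v w).

Lemma eval_lsh_lassoc_cons f a u b v c w :
  eval_lsh_lassoc f (a :: u) (b :: v) (c :: w) =
    eval_lsh_lassoc (fun s => f (a :: s)) u (b :: v) (c :: w)
  + eval_lsh_lassoc (fun s => f (c :: s)) (a :: u) (b :: v) w
  - eval_lsh_lassoc (fun s => f (a * c :: 1 :: s)) u (b :: v) w
  + eval_lsh_lassoc (fun s => f (b :: s)) (a :: u) v (c :: w)
  - eval_lsh_lassoc (fun s => f (b * c :: 1 :: s)) (a :: u) v w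
  - eval_lsh_lassoc (fun s => f (a * b :: 1 :: s)) u v (c :: w)
  + eval_lsh_lassoc (fun s => f (a * b * c :: 1 :: 1 :: s)) u v w.
Proof.
rewrite {1}/eval_lsh_lassoc evalF_lsh_cons.
under eq_evalF => s do rewrite evalF_lsh_cons.
under [in X in _ + X - _]eq_evalF => s do rewrite evalF_lsh_cons.
under [in X in _ - X]eq_evalF => s do rewrite evalF_lsh_cons !evalF_lsh1l.
rewrite !evalFB !evalFD /eval_lsh_lassoc [in RHS]evalF_lsh_cons.
rewrite !opprD !opprK !addrA.
by rewrite [LHS](ACl (1*2*5*8*3*4*6*7*9)).
Qed.

Lemma eval_lsh_rassoc_cons f a u b v c w :
  eval_lsh_rassoc f (a :: u) (b :: v) (c :: w) =
    eval_lsh_rassoc (fun s => f (a :: s)) u (b :: v) (c :: w)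
  + eval_lsh_rassoc (fun s => f (b :: s)) (a :: u) v (c :: w)
  + eval_lsh_rassoc (fun s => f (c :: s)) (a :: u) (b :: v) w
  - eval_lsh_rassoc (fun s => f (a * b :: 1 :: s)) u v (c :: w)
  - eval_lsh_rassoc (fun s => f (a * c :: 1 :: s)) u (b :: v) w
  - eval_lsh_rassoc (fun s => f (b * c :: 1 :: s)) (a :: u) v w
  + eval_lsh_rassoc (fun s => f (a * (b * c) :: 1 :: 1 :: s)) u v w.
Proof.
rewrite {1}/eval_lsh_rassoc evalF_lsh_cons.
under eq_evalF => s do rewrite evalF_lsh_cons.
under [in X in _ + X - _]eq_evalF => s do rewrite evalF_lsh_cons.
under [in X in _ - X]eq_evalF => s do rewrite evalF_lsh_cons !evalF_lsh1r.
rewrite !evalFB !evalFD /eval_lsh_rassoc [in RHS]evalF_lsh_cons.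
rewrite !opprD !opprK !addrA.
by rewrite [LHS](ACl (1*4*7*2*5*3*6*8*9)).
Qed.

Lemma eval_lsh_assoc f u v w :
  eval_lsh_lassoc f u v w = eval_lsh_rassoc f u v w.
Proof.
move: {2}(size u + size v + size w)%N (leqnn (size u + size v + size w)) => n.
elim: n f u v w => [|n IHn] f [|a u] [|b v] [|c w] //= size_uvw;
  rewrite /eval_lsh_lassoc /eval_lsh_rassoc ?lsh0l ?lsh0r ?evalF_seq1 //;
  try by apply: eq_evalF => t; rewrite ?lsh0l ?lsh0r evalF_seq1.
rewrite -/(eval_lsh_lassoc _ _ _ _) -/(eval_lsh_rassoc _ _ _ _).
rewrite eval_lsh_lassoc_cons eval_lsh_rassoc_cons !IHn /= ?mulrA; try lia.
by rewrite [LHS](ACl (1*4*2*6*3*5*7)).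
Qed.

End ShuffleEvaluation.

Section TplusEvaluation.
Variables (K : fieldType) (A : comAlgType K).
Implicit Types (X Y Z : tplus A).

Definition evalP (V : lmodType K) (g : A * seq A -> V) X : V :=
  \sum_(p <- X) p.1 *: g p.2.

(* Equality of formal sums under every evaluation; finer than [tpeq], which
   only tests multilinear evaluations. *)
Definition formal_eq X Y :=
  forall (V : lmodType K) (g : A * seq A -> V), evalP g X = evalP g Y.

Lemma formal_eq_tpeq X Y : formal_eq X Y -> tpeq X Y.
Proof.
move=> eqXY V f _; rewrite /evalF /toT !big_map.
exact: (eqXY V (fun p => f (p.1 :: p.2))).
Qed.

Definition tstar X Y := tpadd (tpadd (tprec X Y) (tsucc X Y)) (tdot X Y).

Section Evaluation.
Variable V : lmodType K.
Implicit Types (g : A * seq A -> V).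

Lemma evalP_cat g X Y : evalP g (tpadd X Y) = evalP g X + evalP g Y.
Proof. by rewrite /evalP /tpadd big_cat. Qed.

Lemma eq_evalP g1 g2 X : g1 =1 g2 -> evalP g1 X = evalP g2 X.
Proof. by move=> eg; apply: eq_bigr => p _; rewrite eg. Qed.

Lemma evalPD g1 g2 X : evalP (fun p => g1 p + g2 p) X = evalP g1 X + evalP g2 X.
Proof.
by rewrite /evalP -big_split; apply: eq_bigr => p _; rewrite scalerDr.
Qed.

Lemma evalPN g X : evalP (fun p => - g p) X = - evalP g X.
Proof. by rewrite /evalP -sumrN; apply: eq_bigr => p _; rewrite scalerN. Qed.

Lemma evalP_tpscale g k X : evalP g (tpscale k X) = k *: evalP g X.
Proof.
rewrite /evalP /tpscale big_map scaler_sumr.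
by apply: eq_bigr => p _; rewrite scalerA.
Qed.

Lemma evalP_PA g X : evalP g (PA X) = evalP (fun p => g (1, p.1 :: p.2)) X.
Proof. by rewrite /evalP /PA big_map. Qed.

Lemma evalP_tpone g : evalP g (tpone A) = g (1, [::]).
Proof. by rewrite /evalP /tpone big_seq1 scale1r. Qed.

Lemma evalP_tdag dg g X :
  evalP g (tdag dg X) = evalP (fun p => g (dg p.1, map dg p.2)) X.
Proof. by rewrite /evalP /tdag big_map. Qed.

Lemma evalP_barmul g X Y : evalP g (barmul X Y) =
  evalP (fun x => evalP (fun y =>
    evalF (fun w => g (x.1 * y.1, w)) (lsh x.2 y.2)) Y) X.
Proof.
rewrite /evalP /barmul big_flatten big_map; apply: eq_bigr => p _.
rewrite big_flatten big_map scaler_sumr; apply: eq_bigr => q _.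
rewrite big_map /evalF !scaler_sumr; apply: eq_bigr => r _.
by rewrite !scalerA.
Qed.

Lemma exchange_evalP (F : A * seq A -> A * seq A -> V) X Y :
  evalP (fun x => evalP (F x) Y) X = evalP (fun y => evalP (F^~ y) X) Y.
Proof.
rewrite /evalP; under eq_bigr => x _ do rewrite scaler_sumr.
rewrite exchange_big /=; apply: eq_bigr => y _.
rewrite scaler_sumr; apply: eq_bigr => x _.
by rewrite !scalerA mulrC.
Qed.

Lemma exchange_evalF_evalP (F : seq A -> A * seq A -> V) (W : fsum A) Z :
  evalF (fun w => evalP (F w) Z) W = evalP (fun z => evalF (F^~ z) W) Z.
Proof.
rewrite /evalP /evalF; under eq_bigr => x _ do rewrite scaler_sumr.
rewrite exchange_big /=; apply: eq_bigr => y _.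
rewrite scaler_sumr; apply: eq_bigr => x _.
by rewrite !scalerA mulrC.
Qed.

Lemma evalP_tprec g X Y : evalP g (tprec X Y) =
  evalP (fun x => evalP (fun y =>
    evalF (fun w => g (x.1, w)) (lsh x.2 (y.1 :: y.2))) Y) X.
Proof.
rewrite /tprec evalP_barmul; apply: eq_evalP => x; rewrite evalP_PA.
by apply: eq_evalP => y /=; rewrite mulr1.
Qed.

Lemma evalP_tsucc g X Y : evalP g (tsucc X Y) =
  evalP (fun x => evalP (fun y =>
    evalF (fun w => g (y.1, w)) (lsh (x.1 :: x.2) y.2)) Y) X.
Proof.
rewrite /tsucc evalP_barmul evalP_PA; apply: eq_evalP => x.
by apply: eq_evalP => y /=; rewrite mul1r.
Qed.

(* Multiplying by P_A(1_A) = 1_A (x) 1_A inserts a letter 1_A in front. *)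
Lemma evalP_tdot g X Y : evalP g (tdot X Y) =
  - evalP (fun x => evalP (fun y =>
      evalF (fun w => g (x.1 * y.1, 1 :: w)) (lsh x.2 y.2)) Y) X.
Proof.
rewrite /tdot evalP_tpscale scaleN1r !evalP_barmul; congr (- _).
apply: eq_evalP => x; rewrite evalP_PA evalP_tpone /= exchange_evalF_evalP.
apply: eq_evalP => y /=; rewrite mulr1 evalF_lshC evalF_lsh1l lsh0l evalF_seq1.
exact: evalF_lsh1l.
Qed.

(* The three products together give the full shuffle of the two words. *)
Lemma evalP_tstar (k : seq A -> V) g X Y :
  (forall a w, g (a, w) = k (a :: w)) ->
  evalP g (tstar X Y) =
  evalP (fun x => evalP (fun y => evalF k (lsh (x.1 :: x.2) (y.1 :: y.2))) Y) X.
Proof.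
move=> gk; rewrite !evalP_cat evalP_tprec evalP_tsucc evalP_tdot.
rewrite -evalPN -!evalPD; apply: eq_evalP => x.
rewrite -evalPN -!evalPD; apply: eq_evalP => y.
by rewrite evalF_lsh_cons; congr (_ + _ - _); apply: eq_evalF => w.
Qed.

End Evaluation.
End TplusEvaluation.

Section Tridendriform.
Variables (K : fieldType) (A : comAlgType K).
Implicit Types (X Y Z : tplus A).

Lemma tprec_tprec X Y Z : formal_eq (tprec (tprec X Y) Z) (tprec X (tstar Y Z)).
Proof.
move=> V g; rewrite !evalP_tprec; apply: eq_evalP => x.
rewrite (evalP_tstar (k := fun t =>
  evalF (fun w => g (x.1, w)) (lsh x.2 t))) //.
apply: eq_evalP => y; rewrite exchange_evalF_evalP; apply: eq_evalP => z.
exact: eval_lsh_assoc.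
Qed.

Lemma tprec_tsucc X Y Z : formal_eq (tprec (tsucc X Y) Z) (tsucc X (tprec Y Z)).
Proof.
move=> V g; rewrite evalP_tprec !evalP_tsucc; apply: eq_evalP => x.
rewrite evalP_tprec; apply: eq_evalP => y; rewrite exchange_evalF_evalP.
apply: eq_evalP => z /=; exact: eval_lsh_assoc.
Qed.

Lemma tsucc_tstar X Y Z : formal_eq (tsucc (tstar X Y) Z) (tsucc X (tsucc Y Z)).
Proof.
move=> V g; rewrite evalP_tsucc.
rewrite (evalP_tstar (k := fun t => evalP (fun z =>
  evalF (fun w => g (z.1, w)) (lsh t z.2)) Z)) //.
rewrite evalP_tsucc; apply: eq_evalP => x; rewrite evalP_tsucc.
apply: eq_evalP => y; rewrite exchange_evalF_evalP.
apply: eq_evalP => z /=; exact: eval_lsh_assoc.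
Qed.

Lemma tdot_tsucc X Y Z : formal_eq (tdot (tsucc X Y) Z) (tsucc X (tdot Y Z)).
Proof.
move=> V g; rewrite evalP_tdot !evalP_tsucc.
under [RHS]eq_evalP => x do rewrite evalP_tdot.
rewrite evalPN; congr (- _); apply: eq_evalP => x; apply: eq_evalP => y.
rewrite [LHS]exchange_evalF_evalP; apply: eq_evalP => z /=.
under [RHS]eq_evalF => t do rewrite evalF_lsh1r.
exact: eval_lsh_assoc.
Qed.

Lemma tdot_tprec X Y Z : formal_eq (tdot (tprec X Y) Z) (tdot X (tsucc Y Z)).
Proof.
move=> V g; rewrite !evalP_tdot evalP_tprec; congr (- _); apply: eq_evalP => x.
rewrite evalP_tsucc; apply: eq_evalP => y; rewrite exchange_evalF_evalP.
apply: eq_evalP => z /=; exact: eval_lsh_assoc.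
Qed.

Lemma tprec_tdot X Y Z : formal_eq (tprec (tdot X Y) Z) (tdot X (tprec Y Z)).
Proof.
move=> V g; rewrite evalP_tprec !evalP_tdot; congr (- _); apply: eq_evalP => x.
rewrite evalP_tprec; apply: eq_evalP => y; rewrite exchange_evalF_evalP.
apply: eq_evalP => z /=.
under eq_evalF => s do rewrite evalF_lsh1l.
exact: eval_lsh_assoc.
Qed.

Lemma tdotA X Y Z : formal_eq (tdot (tdot X Y) Z) (tdot X (tdot Y Z)).
Proof.
move=> V g; rewrite !evalP_tdot; congr (- _).
under [RHS]eq_evalP => x do rewrite evalP_tdot.
rewrite evalPN; congr (- _); apply: eq_evalP => x; apply: eq_evalP => y.
rewrite [LHS]exchange_evalF_evalP; apply: eq_evalP => z /=.
under eq_evalF => s do rewrite evalF_lsh1l.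
under [RHS]eq_evalF => t do rewrite evalF_lsh1r.
rewrite mulrA; exact: eval_lsh_assoc.
Qed.

Lemma tprec_tsuccC X Y : formal_eq (tprec X Y) (tsucc Y X).
Proof.
move=> V g; rewrite evalP_tprec evalP_tsucc exchange_evalP.
by apply: eq_evalP => x; apply: eq_evalP => y; apply: evalF_lshC.
Qed.

Lemma tdotC X Y : formal_eq (tdot X Y) (tdot Y X).
Proof.
move=> V g; rewrite !evalP_tdot exchange_evalP; congr (- _).
by apply: eq_evalP => x; apply: eq_evalP => y; rewrite evalF_lshC mulrC.
Qed.

End Tridendriform.

Section Dagger.
Variables (K : fieldType) (A : comAlgType K) (dg : A -> A).
Implicit Types (u v : seq A) (X Y : tplus A).
Hypotheses (dg1 : dg 1 = 1) (dgM : {morph dg : a b / a * b}).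

Lemma lsh_map u v :
  lsh (map dg u) (map dg v) = [seq (p.1, map dg p.2) | p <- lsh u v].
Proof.
elim: u v => [|a u IHu] v; first by rewrite /= !lsh0l.
elim: v => [|b v IHv]; first by rewrite /= !lsh0r.
rewrite /= lsh_cons (IHu (b :: v)) IHv IHu /consF /scaleF !map_cat -!map_comp.
by congr (_ ++ _ ++ _); apply: eq_map => p /=; rewrite dgM dg1.
Qed.

Lemma evalF_lsh_map (V : lmodType K) (f : seq A -> V) u v :
  evalF f (lsh (map dg u) (map dg v)) = evalF (f \o map dg) (lsh u v).
Proof. by rewrite lsh_map /evalF big_map. Qed.

Lemma tdag_tprec X Y :
  formal_eq (tdag dg (tprec X Y)) (tprec (tdag dg X) (tdag dg Y)).
Proof.
move=> V g; rewrite evalP_tdag !evalP_tprec evalP_tdag; apply: eq_evalP => x.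
rewrite evalP_tdag; apply: eq_evalP => y /=.
exact: esym (evalF_lsh_map _ x.2 (y.1 :: y.2)).
Qed.

Lemma tdag_tdot X Y :
  formal_eq (tdag dg (tdot X Y)) (tdot (tdag dg X) (tdag dg Y)).
Proof.
move=> V g; rewrite evalP_tdag !evalP_tdot evalP_tdag; congr (- _).
apply: eq_evalP => x; rewrite evalP_tdag; apply: eq_evalP => y /=.
by rewrite evalF_lsh_map; apply: eq_evalF => w /=; rewrite dgM dg1.
Qed.

End Dagger.

Unset Implicit Arguments.
Theorem corollary4p10 (K : fieldType) (A : comAlgType K) (dg : A -> A)
  (charK0 : [pchar K] =i pred0)
  (dg_lin : forall (k : K) (a b : A), dg (k *: a + b) = k *: dg a + dg b)
  (dg_inv : forall a : A, dg (dg a) = a)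
  (dg_anti : forall a b : A, dg (a * b) = dg b * dg a) :
  [/\ is_tridendriform (@tpeq K A) (@tpadd K A)
        (@tprec K A) (@tsucc K A) (@tdot K A),
      is_commutative_trid (@tpeq K A) (@tprec K A) (@tsucc K A) (@tdot K A),
      (forall X Y : @tplus K A,
          tpeq (tdag dg (tprec X Y)) (tprec (tdag dg X) (tdag dg Y))) &
      (forall X Y : @tplus K A,
          tpeq (tdag dg (tdot X Y)) (tdot (tdag dg X) (tdag dg Y)))].
Proof.
have dgM : {morph dg : a b / a * b} by move=> a b; rewrite dg_anti mulrC.
have dg1 : dg 1 = 1
  by rewrite -[LHS]mulr1 -[X in _ * X]dg_inv -dg_anti mulr1 dg_inv.
split.
- by move=> X Y Z; do !split; apply: formal_eq_tpeq;
    [exact: tprec_tprec | exact: tprec_tsucc | exact: tsucc_tstar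
    | exact: tdot_tsucc | exact: tdot_tprec | exact: tprec_tdot | exact: tdotA].
- by move=> X Y; split; apply: formal_eq_tpeq;
    [exact: tprec_tsuccC | exact: tdotC].
- by move=> X Y; apply: formal_eq_tpeq; exact: tdag_tprec.
- by move=> X Y; apply: formal_eq_tpeq; exact: tdag_tdot.
Qed.
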